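(* Let $\varphi\colon\mathcal{A}\to\mathcal{A}^*$ be a substitution of constant length, let $X_\varphi\subset\mathcal{A}^{\mathbf{N}}$ be the one-sided system it generates, and let $\pi\colon X_\varphi\to Y$ be a factor map onto some one-sided subshift $Y$. Then there is a constant $K$ such that $|\pi^{-1}(y)|\leq K$ for every nonperiodic $y\in Y$.
   Context: One-sided setting: $\mathbf{N}=\{0,1,2,\dots\}$, $\varphi$ is growing of constant length $k\ge2$ and acts on $\mathcal{A}^{\mathbf{N}}$ by concatenation; $T$ is the one-sided shift $(Tx)_n=x_{n+1}$. $X_\varphi=\{x\in\mathcal{A}^{\mathbf{N}}:$ every finite factor of $x$ appears in $\varphi^n(a)$ for some $a\in\mathcal{A}$, $n\geq0\}$. A one-sided subshift is a closed $Y\subset\mathcal{B}^{\mathbf{N}}$ with $T(Y)\subset Y$; a factor map is a continuous surjection commuting with the shifts. $y$ is periodic if $T^py=y$ for some $p\geq1$. *)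

From mathcomp Require Import all_boot.
Set Implicit Arguments. Unset Strict Implicit. Unset Printing Implicit Defensive.

Definition shift (A : Type) (x : nat -> A) : nat -> A := fun n => x n.+1.

Definition subst_word (A : Type) (phi : A -> seq A) (w : seq A) : seq A :=
  flatten (map phi w).

Definition subst_iter (A : Type) (phi : A -> seq A) (n : nat) (a : A) : seq A :=
  iter n (subst_word phi) [:: a].

Definition factor (A : Type) (x : nat -> A) (i n : nat) : seq A :=
  [seq x j | j <- iota i n].

Definition const_length_subst (A : Type) (phi : A -> seq A) (k : nat) : Prop :=
  1 < k /\ forall a, size (phi a) = k.

Definition X_subst (A : eqType) (phi : A -> seq A) (x : nat -> A) : Prop :=
  forall i n, exists (a : A) (m : nat), infix (factor x i n) (subst_iter phi m a).

(* Closedness in the product topology (A discrete, finite). *)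
Definition seq_closed (B : Type) (Y : (nat -> B) -> Prop) : Prop :=
  forall y, (forall n, exists y', Y y' /\ forall i, i < n -> y' i = y i) -> Y y.

Definition subshift (B : Type) (Y : (nat -> B) -> Prop) : Prop :=
  seq_closed Y /\ forall y, Y y -> Y (shift y).

Definition continuous_on (A B : Type) (X : (nat -> A) -> Prop)
    (pi : (nat -> A) -> (nat -> B)) : Prop :=
  forall x, X x -> forall n, exists m, forall x', X x' ->
    (forall i, i < m -> x' i = x i) -> forall i, i < n -> pi x' i = pi x i.

Definition factor_map (A B : Type) (X : (nat -> A) -> Prop)
    (Y : (nat -> B) -> Prop) (pi : (nat -> A) -> (nat -> B)) : Prop :=
  [/\ forall x, X x -> Y (pi x),
      forall y, Y y -> exists x, X x /\ forall n, pi x n = y n,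
      continuous_on X pi
    & forall x, X x -> forall n, pi (shift x) n = shift (pi x) n].

Definition periodic (B : Type) (y : nat -> B) : Prop :=
  exists p, 0 < p /\ forall n, y (n + p) = y n.

From mathcomp Require Import all_boot zify.
From Stdlib Require Import Classical IndefiniteDescription.
Set Implicit Arguments. Unset Strict Implicit. Unset Printing Implicit Defensive.

(* By compactness the factor map is a sliding block code with some window r.
   Every point of X_phi is, on [0, (k+2) k^m), a shift by less than k^m of
   phi^m applied letterwise to some sequence, so at most k+3 letters of that
   sequence are involved.  Hence if a fibre over y has more than |A|^(k+3)
   points, two of them share these letters, and for large m (beyond the
   window and the distance at which the fibre points separate) one is a
   shift of the other by some 0 < d_m < k^m.  So y has period d_m on its
   prefix of length (k+1) k^m for every large m; since d_m + d_(m+1) stays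
   below (k+1) k^m, a Fine-Wilf type argument propagates the first of these
   periods to the whole of y, which is then periodic. *)

Definition prefix_period (B : Type) (y : nat -> B) (p P : nat) : Prop :=
  forall t, t + p < P -> y t = y (t + p).

Definition sliding_window (A B : Type) (X : (nat -> A) -> Prop)
    (pi : (nat -> A) -> nat -> B) (r : nat) : Prop :=
  forall x x' t, X x -> X x' -> (forall i, t <= i < t + r -> x i = x' i) ->
  pi x t = pi x' t.

Section Factors.
Variable A : Type.
Implicit Types x : nat -> A.

Lemma size_factor x i n : size (factor x i n) = n.
Proof. by rewrite size_map size_iota. Qed.

Lemma factorS x i n : factor x i n.+1 = rcons (factor x i n) (x (i + n)).
Proof. by rewrite /factor -addn1 iotaD map_cat cats1. Qed.

Lemma eq_factor x x' i n :
  factor x i n = factor x' i n <-> forall j, i <= j < i + n -> x j = x' j.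
Proof.
rewrite /factor -eq_in_map.
by split=> agree j; [rewrite -mem_iota; apply: agree | rewrite mem_iota; apply: agree].
Qed.

Lemma factor_shift x i n : factor (shift x) i n = factor x i.+1 n.
Proof. by rewrite /factor -add1n iotaDl -map_comp. Qed.

Lemma iter_shiftE x t i : iter t (@shift A) x i = x (i + t).
Proof. by elim: t i => [|t IH] i /=; rewrite ?addn0 // /shift IH addnS. Qed.

End Factors.

Section Compactness.
Variables (A : finType) (xs : nat -> nat -> A).

Definition frequent_prefix (p : seq A) : Prop :=
  forall N, exists2 r, N <= r & factor (xs r) 0 (size p) = p.

Lemma frequent_prefix_rcons p :
  frequent_prefix p -> exists a, frequent_prefix (rcons p a).
Proof.
move=> freq_p; apply: NNPP => no_ext.
have /functional_choice [bound bound_ok] : forall a, exists N, forall r,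
    N <= r -> factor (xs r) 0 (size p).+1 <> rcons p a.
  move=> a; apply: NNPP => unbounded; apply: no_ext; exists a => N.
  rewrite size_rcons; apply: NNPP => none; apply: unbounded; exists N.
  by move=> r le_Nr eq_r; apply: none; exists r.
have [r le_r eq_r] := freq_p (\max_a bound a).
apply: (bound_ok (xs r (size p)) r).
  by apply: leq_trans le_r; apply: leq_bigmax.
by rewrite factorS eq_r.
Qed.

Lemma cluster_point : exists z : nat -> A, forall L N,
  exists2 r, N <= r & forall i, i < L -> xs r i = z i.
Proof.
have /functional_choice [ext ext_ok] : forall p, exists a,
    frequent_prefix p -> frequent_prefix (rcons p a).
  move=> p; case: (classic (frequent_prefix p)) => [/frequent_prefix_rcons|not_freq].
    by case=> a; exists a.
  by exists (xs 0 0) => /not_freq.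
pose pref n := iter n (fun p => rcons p (ext p)) [::].
pose z i := ext (pref i).
have pref_factor n : pref n = factor z 0 n.
  by elim: n => [|n IH] //; rewrite factorS /= -IH.
have freq n : frequent_prefix (pref n).
  by elim: n => [|n IH] /=; [move=> N; exists N | exact: ext_ok].
exists z => L N; have [r le_r] := freq L N.
rewrite pref_factor size_factor => /eq_factor agree.
by exists r => // i lt_iL; apply: agree.
Qed.

End Compactness.

Lemma continuous_on_uniform (A : finType) (B : Type) (X : (nat -> A) -> Prop)
    (pi : (nat -> A) -> nat -> B) :
  seq_closed X -> continuous_on X pi -> exists r, forall x x', X x -> X x' ->
    (forall i, i < r -> x i = x' i) -> pi x 0 = pi x' 0.
Proof.
move=> X_closed pi_cont; apply: NNPP => not_unif.
have /functional_choice [bad bad_ok] : forall r, exists xx : (nat -> A) * (nat -> A),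
    [/\ X xx.1, X xx.2, forall i, i < r -> xx.1 i = xx.2 i & pi xx.1 0 <> pi xx.2 0].
  move=> r; apply: NNPP => none; apply: not_unif; exists r => x x' Xx Xx' agree.
  by apply: NNPP => neq; apply: none; exists (x, x').
have [z z_cluster] := cluster_point (fun r => (bad r).1).
have Xz : X z.
  apply: X_closed => n; have [r _ agree] := z_cluster n 0.
  by exists (bad r).1; case: (bad_ok r).
have [m m_ok] := pi_cont z Xz 1.
have [r le_mr agree] := z_cluster m m.
have [X1 X2 agree12 neq] := bad_ok r.
apply: neq; rewrite (m_ok _ X1 agree 0 isT) (m_ok _ X2 _ 0 isT) // => i lt_im.
by rewrite -agree12 ?agree //; apply: leq_trans lt_im le_mr.
Qed.

Section FactorMap.
Variables (A : finType) (B : Type) (X : (nat -> A) -> Prop).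
Variables (Y : (nat -> B) -> Prop) (pi : (nat -> A) -> nat -> B).
Hypotheses (X_shift : forall x, X x -> X (shift x)) (pi_factor : factor_map X Y pi).

Lemma X_iter_shift x t : X x -> X (iter t (@shift A) x).
Proof. by elim: t => [|t IH] //= /IH; apply: X_shift. Qed.

Lemma pi_iter_shift x t n : X x -> pi (iter t (@shift A) x) n = pi x (n + t).
Proof.
have [_ _ _ pi_shift] := pi_factor.
move=> Xx; elim: t n => [|t IH] n /=; first by rewrite addn0.
rewrite pi_shift; last exact: X_iter_shift.
by rewrite addnS -addSn; apply: IH.
Qed.

Lemma factor_map_sliding_window : seq_closed X -> exists r, sliding_window X pi r.
Proof.
move=> X_closed; have [_ _ pi_cont _] := pi_factor.
have [r r_ok] := continuous_on_uniform X_closed pi_cont.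
exists r => x x' t Xx Xx' agree.
have := r_ok _ _ (X_iter_shift t Xx) (X_iter_shift t Xx').
rewrite !pi_iter_shift // !add0n; apply=> i lt_ir.
by rewrite !iter_shiftE; apply: agree; lia.
Qed.

Lemma sliding_window_shift_period r y x x' d L P :
  sliding_window X pi r -> X x -> X x' ->
  (forall t, pi x t = y t) -> (forall t, pi x' t = y t) ->
  (forall s, s + d < L -> x' s = x (s + d)) -> P + r <= L -> prefix_period y d P.
Proof.
move=> window Xx Xx' pix pix' x'_shift le_PL t lt_tP.
rewrite -pix' -pix -(pi_iter_shift d t Xx).
apply: window => //; first exact: X_iter_shift.
by move=> i /andP[_ lt_i]; rewrite iter_shiftE x'_shift //; lia.
Qed.

End FactorMap.

Section Substitution.
Variables (A : Type) (phi : A -> seq A).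

Lemma subst_word_cat u v :
  subst_word phi (u ++ v) = subst_word phi u ++ subst_word phi v.
Proof. by rewrite /subst_word map_cat flatten_cat. Qed.

Lemma iter_subst_word_cat m u v : iter m (subst_word phi) (u ++ v) =
  iter m (subst_word phi) u ++ iter m (subst_word phi) v.
Proof. by elim: m => [|m IH] //=; rewrite IH subst_word_cat. Qed.

Lemma iter_subst_word_flatten m w :
  iter m (subst_word phi) w = flatten [seq iter m (subst_word phi) [:: a] | a <- w].
Proof.
elim: w => [|a w IH] /=; first by elim: m => [|m IH] //=; rewrite IH.
by rewrite -IH -iter_subst_word_cat.
Qed.

Lemma subst_iterD m1 m2 a :
  subst_iter phi (m1 + m2) a = flatten (map (subst_iter phi m1) (subst_iter phi m2 a)).
Proof. by rewrite /subst_iter iterD iter_subst_word_flatten. Qed.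

Variable k : nat.
Hypothesis size_phi : forall a, size (phi a) = k.

Lemma size_subst_word w : size (subst_word phi w) = k * size w.
Proof.
elim: w => [|a w IH]; first by rewrite muln0.
by rewrite -cat1s subst_word_cat size_cat IH /subst_word /= cats0 size_phi mulnS.
Qed.

Lemma size_subst_iter m a : size (subst_iter phi m a) = k ^ m.
Proof.
elim: m => [|m IH] //.
by rewrite /subst_iter /= size_subst_word -/(subst_iter phi m a) IH expnS.
Qed.

End Substitution.

Lemma nth_flatten_const (T : Type) (x0 : T) (ss : seq (seq T)) N i :
  all (fun s => size s == N) ss -> i < size ss * N ->
  nth x0 (flatten ss) i = nth x0 (nth [::] ss (i %/ N)) (i %% N).
Proof.
elim: ss i => [|s ss IH] i //= /andP[/eqP size_s sizes] lt_i.
have N_gt0 : 0 < N by move: lt_i; rewrite mulSn; case: (N) => // ?; lia.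
rewrite nth_cat size_s; case: ltnP => [lt_iN | le_Ni].
  by rewrite divn_small ?modn_small.
move: lt_i; move: (i - N) (subnKC le_Ni) => j <-.
rewrite mulSn ltn_add2l => /(IH _ sizes) ->.
have -> : N + j = 1 * N + j by rewrite mul1n.
by rewrite divnMDl // modnMDl add1n.
Qed.

(* phi^m(w 0) phi^m(w 1) ... : block u occupies [u k^m, (u+1) k^m); the
   default of [nth] is never reached when all |phi a| = k. *)
Definition subst_seq (A : Type) (phi : A -> seq A) (k m : nat) (w : nat -> A) :
    nat -> A :=
  fun t => nth (w (t %/ k ^ m)) (subst_iter phi m (w (t %/ k ^ m))) (t %% k ^ m).

Section SubstitutionSubshift.
Variables (A : eqType) (phi : A -> seq A) (k : nat).

Lemma subst_seq_eq_on m M w w' t : (forall u, u < M -> w u = w' u) ->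
  t < M * k ^ m -> subst_seq phi k m w t = subst_seq phi k m w' t.
Proof.
move=> agree lt_t; have N_gt0 : 0 < k ^ m by move: lt_t; case: (k ^ m) => //; lia.
by rewrite /subst_seq agree // ltn_divLR.
Qed.

Lemma X_subst_closed : seq_closed (X_subst phi).
Proof.
move=> x approx i n; have [x' [Xx' agree]] := approx (i + n).
suff -> : factor x i n = factor x' i n by apply: Xx'.
by apply/eq_factor => j /andP[_ lt_j]; rewrite agree.
Qed.

Lemma X_subst_shift x : X_subst phi x -> X_subst phi (shift x).
Proof. by move=> Xx i n; rewrite factor_shift; apply: Xx. Qed.

Hypotheses (k_gt1 : 1 < k) (size_phi : forall a, size (phi a) = k).

Lemma X_subst_desubst x m L : X_subst phi x -> k ^ m <= L ->
  exists j w, j < k ^ m /\ forall t, t < L -> x t = subst_seq phi k m w (j + t).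
Proof.
move=> Xx le_L; have [a [m' /infixP [s1 [s2 word]]]] := Xx 0 L.
have x_word t : t < L -> x t = nth a (subst_iter phi m' a) (size s1 + t).
  move=> lt_t; rewrite word nth_cat ltnNge leq_addr /= addKn nth_cat size_factor lt_t.
  by rewrite (nth_map 0) ?size_iota // nth_iota.
have le_s1L : size s1 + L <= k ^ m'.
  by rewrite -(size_subst_iter size_phi m' a) word !size_cat size_factor addnA leq_addr.
have le_m : m <= m'.
  by rewrite -(leq_exp2l _ _ k_gt1) (leq_trans le_L) // (leq_trans _ le_s1L) ?leq_addl.
move: x_word le_s1L; rewrite -(subnKC le_m) subst_iterD expnD.
move: (size s1) (subst_iter phi (m' - m) a) (size_subst_iter size_phi (m' - m) a).
move=> s V <- x_word le_sL; set N := k ^ m.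
have N_gt0 : 0 < N by rewrite expn_gt0 ltnW.
exists (s %% N), (fun u => nth a V (s %/ N + u)); split=> [|t lt_t].
  by rewrite ltn_mod.
have div_st : (s + t) %/ N = s %/ N + (s %% N + t) %/ N.
  by rewrite {1}(divn_eq s N) -addnA divnMDl.
have mod_st : (s + t) %% N = (s %% N + t) %% N.
  by rewrite {1}(divn_eq s N) -addnA modnMDl.
rewrite x_word // (@nth_flatten_const _ _ _ N); first last.
- by rewrite size_map mulnC; apply: leq_trans le_sL; rewrite ltn_add2l.
- by apply/allP => _ /mapP[b _ ->]; rewrite (size_subst_iter size_phi).
rewrite div_st mod_st (nth_map a); last first.
  by rewrite -div_st ltn_divLR // mulnC; apply: leq_trans le_sL; rewrite ltn_add2l.
by rewrite /subst_seq; apply: set_nth_default; rewrite (size_subst_iter size_phi) ltn_mod.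
Qed.

End SubstitutionSubshift.

Lemma pigeonhole_prefix (A : finType) (M n : nat) (g : 'I_n -> nat -> A) :
  #|A| ^ M < n -> exists i i', i != i' /\ forall u, u < M -> g i u = g i' u.
Proof.
move=> n_large.
have /injectivePn [i [i' neq_ii' eq_g]] :
    ~~ injectiveb (fun i => [ffun u : 'I_M => g i u]).
  apply/negP => /injectiveP /leq_card.
  by rewrite card_ffun !card_ord leqNgt n_large.
exists i, i'; split=> // u lt_uM.
by have := congr1 (fun F : {ffun 'I_M -> A} => F (Ordinal lt_uM)) eq_g; rewrite !ffunE.
Qed.

Lemma uniform_separation (I : finType) (A : Type) (f : I -> nat -> A) :
  (forall i j, i != j -> exists t, f i t <> f j t) ->
  exists D, forall i j, i != j -> exists2 t, t < D & f i t <> f j t.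
Proof.
move=> sep; have /functional_choice [g g_sep] : forall ij : I * I,
    exists t, ij.1 != ij.2 -> f ij.1 t <> f ij.2 t.
  case=> i j; case: (eqVneq i j) => [_|/sep [t neq]]; first by exists 0.
  by exists t.
exists (\max_(ij : I * I) (g ij).+1) => i j neq_ij.
by exists (g (i, j)); [apply: (leq_bigmax (i, j)) | apply: (g_sep (i, j))].
Qed.

Lemma prefix_period_extend (B : Type) (y : nat -> B) p q P Q :
  0 < q -> p + q <= P -> P <= Q ->
  prefix_period y q Q -> prefix_period y p P -> prefix_period y p Q.
Proof.
move=> q_gt0 le_pqP le_PQ per_q per_p t.
elim/ltn_ind: t => t IH lt_t.
case: (ltnP (t + p) P) => [|le_P]; first exact: per_p.
have [t' t_def] : exists t', t = t' + q by exists (t - q); rewrite subnK //; lia.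
rewrite t_def -per_q; last lia.
rewrite (IH t'); try lia.
by rewrite per_q addnAC //; lia.
Qed.

Lemma prefix_periods_periodic (B : Type) (y : nat -> B) k m0 : 1 < k ->
  (forall m, m0 <= m -> exists d, 0 < d < k ^ m /\ prefix_period y d (k.+1 * k ^ m)) ->
  periodic y.
Proof.
move=> k_gt1 periods; have [d [/andP[d_gt0 lt_d] per_d]] := periods m0 (leqnn _).
have per_d_all e : prefix_period y d (k.+1 * k ^ (m0 + e)).
  elim: e => [|e IH]; first by rewrite addn0.
  have [q [/andP[q_gt0 lt_q] per_q]] := periods (m0 + e.+1) (leq_addr _ _).
  apply: (prefix_period_extend q_gt0 _ _ per_q IH).
    have : k ^ m0 <= k ^ (m0 + e) by rewrite leq_exp2l ?leq_addr.
    by move: lt_q; rewrite addnS expnS; nia.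
  by rewrite leq_mul2l leq_exp2l // addnS leqnSn orbT.
exists d; split=> // t; symmetry; apply: (per_d_all (t + d)).
have := ltn_expl (m0 + (t + d)) k_gt1; nia.
Qed.

Section Fibre.
Variables (A B : finType) (phi : A -> seq A) (k : nat).
Variables (Y : (nat -> B) -> Prop) (pi : (nat -> A) -> nat -> B) (r : nat).
Hypothesis phi_const : const_length_subst phi k.
Hypothesis pi_factor : factor_map (X_subst phi) Y pi.
Hypothesis pi_window : sliding_window (X_subst phi) pi r.
Variables (y : nat -> B) (n D : nat) (f : 'I_n -> nat -> A).
Hypothesis fibre : forall i, X_subst phi (f i) /\ forall t, pi (f i) t = y t.
Hypothesis f_sep : forall i j, i != j -> exists2 t, t < D & f i t <> f j t.
Hypothesis n_large : #|A| ^ k.+3 < n.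

Lemma fibre_prefix_period m : D + r <= m ->
  exists d, 0 < d < k ^ m /\ prefix_period y d (k.+1 * k ^ m).
Proof.
move=> le_m; have [k_gt1 size_phi] := phi_const; set N := k ^ m.
have lt_N : D + r < N := leq_ltn_trans le_m (ltn_expl m k_gt1).
have /functional_choice [code code_ok] : forall i, exists c : nat * (nat -> A),
    c.1 < N /\ forall t, t < k.+2 * N -> f i t = subst_seq phi k m c.2 (c.1 + t).
  move=> i; have le_N : N <= k.+2 * N by rewrite leq_pmull.
  by have [j [w desub]] := X_subst_desubst k_gt1 size_phi (fibre i).1 le_N; exists (j, w).
have [i0 [i1 [neq_i same_code]]] := pigeonhole_prefix (fun i => (code i).2) n_large.
wlog le_j : i0 i1 neq_i same_code / (code i0).1 <= (code i1).1.
  move=> wlog_le; case: (leqP (code i0).1 (code i1).1) => [|/ltnW]; first exact: wlog_le.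
  by apply: wlog_le; rewrite 1?eq_sym // => u /same_code.
have [lt_j0 f_i0] := code_ok i0; have [lt_j1 f_i1] := code_ok i1.
pose d := (code i1).1 - (code i0).1.
have d_def : (code i0).1 + d = (code i1).1 by rewrite subnKC.
have shift_f s : s + d < k.+2 * N -> f i1 s = f i0 (s + d).
  move=> lt_s; rewrite f_i1 ?f_i0; try lia.
  rewrite addnA addnAC d_def; apply: (@subst_seq_eq_on _ phi k m k.+3) => [u /same_code //|].
  by rewrite mulSn; lia.
case: (posnP d) => [d0 | d_gt0].
  have [t lt_tD neq_t] := f_sep neq_i; exfalso; apply: neq_t.
  by rewrite shift_f d0 ?addn0 // mulSn; lia.
exists d; split; first by apply/andP; split; lia.
apply: (sliding_window_shift_period (@X_subst_shift _ phi) pi_factor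
  pi_window (fibre i0).1 (fibre i1).1 (fibre i0).2 (fibre i1).2 shift_f).
by rewrite mulSn addnC leq_add2r ltnW //; lia.
Qed.

End Fibre.

Unset Implicit Arguments.
Set Strict Implicit.

Theorem lemma4p4 (A B : finType) (phi : A -> seq A) (k : nat)
    (Y : (nat -> B) -> Prop) (pi : (nat -> A) -> (nat -> B)) :
  const_length_subst phi k ->
  subshift Y ->
  factor_map (X_subst phi) Y pi ->
  exists K : nat, forall y, Y y -> ~ periodic y ->
    forall (n : nat) (f : 'I_n -> (nat -> A)),
      (forall i j, i != j -> exists m, f i m <> f j m) ->
      (forall j, X_subst phi (f j) /\ forall m, pi (f j) m = y m) ->
      n <= K.
Proof.
move=> phi_const _ pi_factor.
have [r window] := factor_map_sliding_window (@X_subst_shift _ phi) pi_factor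
  (@X_subst_closed _ phi).
exists (#|A| ^ k.+3) => y _ y_aperiodic n f f_sep fibre.
rewrite leqNgt; apply/negP => n_large; apply: y_aperiodic.
have [D sep_D] := uniform_separation f_sep.
apply: (prefix_periods_periodic (m0 := D + r) phi_const.1) => m le_m.
exact (fibre_prefix_period phi_const pi_factor window fibre sep_D n_large le_m).
Qed.
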